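(* A semiring $(S,+,\cdot)$ is a rectangular skew-ring if and only if it is isomorphic to a direct product of a rectangular band semiring and a skew-ring.
   Context: A semiring $(S,+,\cdot)$ is an algebra with two associative binary operations such that $a(b+c)=ab+ac$ and $(b+c)a=ba+ca$ for all $a,b,c\in S$. An element $a$ is completely regular if there is $x\in S$ with $a=a+x+a$, $a+x=x+a$ and $a(a+x)=a+x$; $S$ is completely regular if all its elements are. $\mathscr{J}^+$ denotes Green's $\mathscr{J}$-relation of the semigroup $(S,+)$. A completely simple semiring is a completely regular semiring with $\mathscr{J}^+=S\times S$. $E^+(S)$ is the set of additive idempotents of $S$. A rectangular skew-ring is a completely simple semiring $S$ such that $E^+(S)$ is a subsemigroup of $(S,+)$. A skew-ring is a semiring whose additive reduct is a (not necessarily commutative) group. A rectangular band semiring is a semiring in which $(S,\cdot)$ is a band and $(S,+)$ is a rectangular band (i.e. $a=a+x+a$ for all $a,x\in S$). Direct products of semirings carry componentwise operations. *)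

From mathcomp Require Import ssreflect ssrfun ssrbool.
Set Implicit Arguments.
Unset Strict Implicit.

Definition is_semiring (S : Type) (add mul : S -> S -> S) : Prop :=
  (forall a b c, add a (add b c) = add (add a b) c) /\
  (forall a b c, mul a (mul b c) = mul (mul a b) c) /\
  (forall a b c, mul a (add b c) = add (mul a b) (mul a c)) /\
  (forall a b c, mul (add b c) a = add (mul b a) (mul c a)).

Definition completely_regular_elt (S : Type) (add mul : S -> S -> S) (a : S) : Prop :=
  exists x, a = add (add a x) a /\ add a x = add x a /\ mul a (add a x) = add a x.

Definition completely_regular (S : Type) (add mul : S -> S -> S) : Prop :=
  is_semiring add mul /\ forall a, completely_regular_elt add mul a.

(* Adjoining an identity: [None] plays the role of the adjoined identity of S^1. *)
Definition laddo (S : Type) (add : S -> S -> S) (u : option S) (s : S) : S :=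
  match u with None => s | Some x => add x s end.
Definition raddo (S : Type) (add : S -> S -> S) (s : S) (v : option S) : S :=
  match v with None => s | Some y => add s y end.

Definition in_ideal_plus (S : Type) (add : S -> S -> S) (a b : S) : Prop :=
  exists u v : option S, a = laddo add u (raddo add b v).

Definition Jplus (S : Type) (add : S -> S -> S) (a b : S) : Prop :=
  in_ideal_plus add a b /\ in_ideal_plus add b a.

Definition completely_simple (S : Type) (add mul : S -> S -> S) : Prop :=
  completely_regular add mul /\ forall a b, Jplus add a b.

Definition Eplus_subsemigroup (S : Type) (add : S -> S -> S) : Prop :=
  forall e f, add e e = e -> add f f = f -> add (add e f) (add e f) = add e f.

Definition rectangular_skew_ring (S : Type) (add mul : S -> S -> S) : Prop :=
  completely_simple add mul /\ Eplus_subsemigroup add.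

Definition rectangular_band_semiring (S : Type) (add mul : S -> S -> S) : Prop :=
  is_semiring add mul /\ (forall a, mul a a = a) /\
  (forall a x, a = add (add a x) a).

Definition skew_ring (S : Type) (add mul : S -> S -> S) : Prop :=
  is_semiring add mul /\
  exists (z : S) (neg : S -> S),
    (forall a, add z a = a /\ add a z = a) /\
    (forall a, add (neg a) a = z /\ add a (neg a) = z).

Definition prod_op (A B : Type) (opA : A -> A -> A) (opB : B -> B -> B)
  (p q : A * B) : A * B := (opA p.1 q.1, opB p.2 q.2).

Definition semiring_iso (S T : Type) (addS mulS : S -> S -> S)
  (addT mulT : T -> T -> T) (f : S -> T) : Prop :=
  bijective f /\
  (forall a b, f (addS a b) = addT (f a) (f b)) /\
  (forall a b, f (mulS a b) = mulT (f a) (f b)).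

From mathcomp Require Import ssreflect ssrfun ssrbool.
From Stdlib Require Import Classical IndefiniteDescription ProofIrrelevance.

Set Implicit Arguments.
Unset Strict Implicit.

(* In a rectangular skew-ring, (S,+) is a completely simple semigroup whose
   idempotents form a subsemigroup E.  Idempotents are primitive, so E is a
   rectangular band and every idempotent can be deleted from the middle of a
   sum: a + e + b = a + b.  Fixing an idempotent e0, the map
   a |-> (unit of the group H-class of a, e0 + a + e0) is then an isomorphism
   of (S,+) onto E x (e0 + S + e0).  Since e s + e s = (e + e) s, E is closed
   under multiplication, the unit map is multiplicative by primitivity, and
   e0 + S + e0 becomes a skew-ring once products are projected back into it,
   because all cross terms e0 s and s e0 are idempotents.  Conversely, in a
   product of a rectangular band semiring and a skew-ring the additive
   idempotents are exactly the pairs (b, 0), and the remaining conditions are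
   checked componentwise. *)

Definition band_skew_ring_decomposable (S : Type) (add mul : S -> S -> S) : Prop :=
  exists (B R : Type) (addB mulB : B -> B -> B) (addR mulR : R -> R -> R)
         (f : S -> B * R),
    rectangular_band_semiring addB mulB /\ skew_ring addR mulR /\
    semiring_iso add mul (prod_op addB addR) (prod_op mulB mulR) f.

Lemma sval_inj (A : Type) (P : A -> Prop) : injective (@sval A P).
Proof. exact: eq_sig_hprop (fun x => @proof_irrelevance (P x)). Qed.

Section RectangularSkewRing.

Variables (S : Type) (add mul : S -> S -> S) (qinv : S -> S).
Local Notation "a + b" := (add a b).
Local Notation "a * b" := (mul a b).
Local Notation idem e := (e + e = e).

Hypothesis addA : associative add.
Hypothesis add_qinvK : forall a, a + qinv a + a = a.
Hypothesis qinvC : forall a, a + qinv a = qinv a + a.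
Hypothesis addJ : forall a b, Jplus add a b.
Hypothesis idem_closed : Eplus_subsemigroup add.

(* Locked, so that rewriting with [addA] does not see through it. *)
Definition unit_of a : S := locked (a + qinv a).

Lemma unit_of_def a : unit_of a = a + qinv a.
Proof. by rewrite /unit_of -lock. Qed.

Lemma unit_ofE a : unit_of a = qinv a + a.
Proof. by rewrite unit_of_def qinvC. Qed.

Lemma unit_of_idem a : idem (unit_of a).
Proof. by rewrite unit_of_def addA add_qinvK. Qed.

Lemma unit_ofl a : unit_of a + a = a.
Proof. by rewrite unit_of_def add_qinvK. Qed.

Lemma unit_ofr a : a + unit_of a = a.
Proof. by rewrite unit_ofE addA add_qinvK. Qed.

Lemma add_sandwich a b : exists s t, a = s + b + t.
Proof.
have [[u [v Ea]] _] := addJ a b.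
exists (raddo add (unit_of a) u), (laddo add v (unit_of a)).
transitivity (unit_of a + a + unit_of a); first by rewrite unit_ofl unit_ofr.
by rewrite {2}Ea; case: u {Ea} => [u|]; case: v => [v|]; rewrite /= ?addA.
Qed.

Lemma idem_primitive e g : idem e -> idem g -> e + g = g -> g + e = g -> g = e.
Proof.
move=> He Hg eg ge.
have [s [t Ee]] := add_sandwich e g.
set w := e + s + g.
have wg : w + g = w by rewrite /w -addA Hg.
have wt : w + t = e by rewrite -[in RHS]He {2}Ee !addA.
set h := unit_of w.
have hg : h + g = h by rewrite /h unit_ofE -addA wg.
have he : h + e = e by rewrite -wt addA unit_ofl.
have gh : g = h by rewrite -eg -he -addA eg hg.
by rewrite -he -gh ge.
Qed.

Lemma idem_rect e f : idem e -> idem f -> e + f + e = e.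
Proof.
move=> He Hf; apply: idem_primitive => //.
- by apply: idem_closed => //; apply: idem_closed.
- by rewrite !addA He.
- by rewrite -addA He.
Qed.

Lemma idem_rect3 x y z : idem x -> idem y -> idem z -> x + y + z = x + z.
Proof.
move=> Hx Hy Hz.
rewrite -{1}(idem_rect Hz Hx) !addA -(addA x y z).
by rewrite (idem_rect Hx (idem_closed Hy Hz)).
Qed.

Lemma add_idem_mid e : idem e -> forall a b, a + e + b = a + b.
Proof.
move=> He a b.
transitivity (a + (unit_of a + e + unit_of b) + b).
  by rewrite !addA unit_ofr -(addA _ (unit_of b)) unit_ofl.
rewrite (idem_rect3 (unit_of_idem a) He (unit_of_idem b)).
by rewrite !addA unit_ofr -addA unit_ofl.
Qed.

Lemma unit_of_unique a e : idem e -> e + a + e = a -> unit_of a = e.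
Proof.
move=> He Ea.
have ea : e + a = a by rewrite -Ea !addA He.
have ae : a + e = a by rewrite -Ea -addA He.
apply: idem_primitive => //; first exact: unit_of_idem.
- by rewrite unit_of_def addA ea.
- by rewrite unit_ofE -addA ae.
Qed.

Lemma unit_of_idemE e : idem e -> unit_of e = e.
Proof. by move=> He; apply: unit_of_unique; rewrite ?He. Qed.

Lemma unit_of_add a b : unit_of (a + b) = unit_of a + unit_of b.
Proof.
apply: unit_of_unique; first exact: idem_closed (unit_of_idem a) (unit_of_idem b).
rewrite !addA (add_idem_mid (unit_of_idem b)) unit_ofl.
by rewrite (add_idem_mid (unit_of_idem a)) -addA unit_ofr.
Qed.

Hypothesis mulA : associative mul.
Hypothesis mulDr : right_distributive mul add.
Hypothesis mulDl : left_distributive mul add.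
Hypothesis mul_unit_of : forall a, a * unit_of a = unit_of a.

Lemma idem_mull e s : idem e -> idem (e * s).
Proof. by move=> He; rewrite -mulDl He. Qed.

Lemma idem_mulr e s : idem e -> idem (s * e).
Proof. by move=> He; rewrite -mulDr He. Qed.

Lemma mul_idem e : idem e -> e * e = e.
Proof. by move=> He; have := mul_unit_of e; rewrite unit_of_idemE. Qed.

Lemma unit_of_mul a b : unit_of (a * b) = unit_of a * unit_of b.
Proof.
set p := unit_of a * unit_of b.
have Hp : idem p := idem_mull _ (unit_of_idem a).
have pl : unit_of a * b = p.
  apply: idem_primitive => //; first exact: idem_mull _ (unit_of_idem a).
  - by rewrite -mulDr unit_ofl.
  - by rewrite -mulDr unit_ofr.
have pr : a * unit_of b = p.
  apply: idem_primitive => //; first exact: idem_mulr _ (unit_of_idem b).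
  - by rewrite -mulDl unit_ofl.
  - by rewrite -mulDl unit_ofr.
apply: (unit_of_unique Hp).
transitivity ((unit_of a + a) * (b + unit_of b)); last by rewrite unit_ofl unit_ofr.
by rewrite mulDl !mulDr pl pr Hp addA.
Qed.

Variable e0 : S.
Hypothesis e0_idem : idem e0.

Definition hproj a := e0 + a + e0.

Lemma hprojK a : hproj (hproj a) = hproj a.
Proof. by rewrite /hproj !addA e0_idem -addA e0_idem. Qed.

Lemma hprojD a b : hproj (a + b) = hproj a + hproj b.
Proof. by rewrite /hproj !addA !(add_idem_mid e0_idem). Qed.

Lemma hproj_mul a b : hproj (hproj a * hproj b) = hproj (a * b).
Proof.
have mid_l s := add_idem_mid (idem_mull s e0_idem).
have mid_r s := add_idem_mid (idem_mulr s e0_idem).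
by rewrite /hproj !mulDl !mulDr !addA !mid_l !mid_r.
Qed.

Lemma hproj_mull a b : hproj (hproj a * b) = hproj (a * b).
Proof. by rewrite -hproj_mul hprojK hproj_mul. Qed.

Lemma hproj_mulr a b : hproj (a * hproj b) = hproj (a * b).
Proof. by rewrite -hproj_mul hprojK hproj_mul. Qed.

Lemma hproj_e0 : hproj e0 = e0.
Proof. by rewrite /hproj !e0_idem. Qed.

Lemma hproj_sandwich e g : idem e -> hproj (e + g + e) = hproj g.
Proof. by move=> He; rewrite /hproj !addA !(add_idem_mid He). Qed.

Lemma unit_of_sandwich e g : idem e -> unit_of (e + g + e) = e.
Proof. by move=> He; apply: (unit_of_unique He); rewrite !addA He -addA He. Qed.

Lemma unit_of_hproj_sandwich a : unit_of a + hproj a + unit_of a = a.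
Proof. by rewrite /hproj !addA !(add_idem_mid e0_idem) unit_ofl unit_ofr. Qed.

Section HClass.

Variable g : S.
Hypothesis Hg : hproj g = g.

Lemma hclass_addl : e0 + g = g.
Proof. by rewrite -Hg /hproj !addA e0_idem. Qed.

Lemma hclass_addr : g + e0 = g.
Proof. by rewrite -Hg /hproj -addA e0_idem. Qed.

Lemma hclass_unit_of : unit_of g = e0.
Proof. by rewrite -Hg; exact: (unit_of_unique e0_idem (hprojK g)). Qed.

Lemma hproj_qinvl : hproj (qinv g) + g = e0.
Proof.
by rewrite /hproj (add_idem_mid e0_idem) -addA -unit_ofE hclass_unit_of e0_idem.
Qed.

Lemma hproj_qinvr : g + hproj (qinv g) = e0.
Proof.
by rewrite /hproj !addA (add_idem_mid e0_idem) -unit_of_def hclass_unit_of e0_idem.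
Qed.

End HClass.

Lemma hclass_add_closed g h : hproj g = g -> hproj h = h -> hproj (g + h) = g + h.
Proof. by rewrite hprojD => -> ->. Qed.

Definition idem_elt := {e : S | idem e}.
(* The H-class of e0, i.e. the maximal subgroup e0 + S + e0 of (S,+). *)
Definition hclass := {g : S | hproj g = g}.

Definition idem_add (e f : idem_elt) : idem_elt :=
  exist _ (sval e + sval f) (idem_closed (svalP e) (svalP f)).
Definition idem_mul (e f : idem_elt) : idem_elt :=
  exist _ (sval e * sval f) (idem_mull _ (svalP e)).

Definition hclass_zero : hclass := exist _ e0 hproj_e0.
Definition hclass_opp (g : hclass) : hclass :=
  exist _ (hproj (qinv (sval g))) (hprojK _).
Definition hclass_add (g h : hclass) : hclass :=
  exist _ (sval g + sval h) (hclass_add_closed (svalP g) (svalP h)).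
Definition hclass_mul (g h : hclass) : hclass :=
  exist _ (hproj (sval g * sval h)) (hprojK _).

Definition decompose a : idem_elt * hclass :=
  (exist _ (unit_of a) (unit_of_idem a), exist _ (hproj a) (hprojK a)).

Lemma idem_elt_rectangular_band : rectangular_band_semiring idem_add idem_mul.
Proof.
split.
  by split; [|split; [|split]] => x y z; apply: sval_inj;
    [exact: addA | exact: mulA | exact: mulDr | exact: mulDl].
split=> [x | x y]; apply: sval_inj; first exact: mul_idem (svalP x).
exact: esym (idem_rect (svalP x) (svalP y)).
Qed.

Lemma hclass_skew_ring : skew_ring hclass_add hclass_mul.
Proof.
split.
  split; [|split; [|split]] => -[g Hg] [h Hh] [k Hk]; apply: sval_inj => /=.
  - exact: addA.
  - by rewrite hproj_mulr hproj_mull mulA.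
  - by rewrite mulDr hprojD.
  - by rewrite mulDl hprojD.
exists hclass_zero, hclass_opp.
by split=> -[g Hg]; split; apply: sval_inj => /=;
  rewrite ?hclass_addl ?hclass_addr ?hproj_qinvl ?hproj_qinvr.
Qed.

Lemma decompose_iso :
  semiring_iso add mul (prod_op idem_add hclass_add) (prod_op idem_mul hclass_mul)
    decompose.
Proof.
split.
  exists (fun p => sval p.1 + sval p.2 + sval p.1) => [a | [[e He] [g Hg]]] /=.
    exact: unit_of_hproj_sandwich.
  by congr pair; apply: sval_inj; rewrite /= ?unit_of_sandwich ?hproj_sandwich.
by split=> a b; congr pair; apply: sval_inj;
  rewrite /= ?unit_of_add ?hprojD ?unit_of_mul ?hproj_mul.
Qed.

Lemma decompose_band_skew_ring : band_skew_ring_decomposable add mul.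
Proof.
exists idem_elt, hclass, idem_add, idem_mul, hclass_add, hclass_mul, decompose.
split; first exact: idem_elt_rectangular_band.
by split; [exact: hclass_skew_ring | exact: decompose_iso].
Qed.

End RectangularSkewRing.

Lemma decomposable_of_empty (S : Type) (add mul : S -> S -> S) :
  is_semiring add mul -> ~ inhabited S -> band_skew_ring_decomposable add mul.
Proof.
move=> HS emptyS.
exists S, unit, add, mul, (fun _ _ => tt), (fun _ _ => tt), (fun a => (a, tt)).
split; first by split=> //; split=> a; case: emptyS; constructor.
split; first by split; [do !split | exists tt, id; split=> -[]].
split; last by split.
by exists fst => [|[a []]].
Qed.

Lemma rectangular_skew_ring_decomposable (S : Type) (add mul : S -> S -> S) :
  rectangular_skew_ring add mul -> band_skew_ring_decomposable add mul.
Proof.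
move=> [[[HS HCR] HJ] HE].
have [[s0] | emptyS] := classic (inhabited S); last exact: decomposable_of_empty.
have [qinv qinvP] := functional_choice _ HCR.
case: HS => addA [mulA [mulDr mulDl]].
have add_qinvK a : add (add a (qinv a)) a = a by rewrite -(proj1 (qinvP a)).
have qinvC a : add a (qinv a) = add (qinv a) a by case: (qinvP a) => _ [].
have mul_unit_of a : mul a (unit_of add qinv a) = unit_of add qinv a.
  by rewrite unit_of_def; case: (qinvP a) => _ [].
exact: (decompose_band_skew_ring addA add_qinvK qinvC HJ HE mulA mulDr
  (fun x y z => mulDl z x y) mul_unit_of (unit_of_idem addA add_qinvK s0)).
Qed.

Lemma prod_semiring (B R : Type) (addB mulB : B -> B -> B)
    (addR mulR : R -> R -> R) :
  is_semiring addB mulB -> is_semiring addR mulR ->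
  is_semiring (prod_op addB addR) (prod_op mulB mulR).
Proof.
move=> [aB [mB [drB dlB]]] [aR [mR [drR dlR]]].
by split; [|split; [|split]] => x y z;
  rewrite /prod_op /= ?(aB, mB, drB, dlB, aR, mR, drR, dlR).
Qed.

Lemma rect_band_idem (B : Type) (add : B -> B -> B) :
  associative add -> (forall a x, a = add (add a x) a) -> forall a, add a a = a.
Proof. by move=> addA rect a; rewrite {1}(rect a a) -(addA a a a) -rect. Qed.

Section SkewRing.

Variables (R : Type) (add mul : R -> R -> R) (z : R) (neg : R -> R).
Hypothesis addA : associative add.
Hypothesis mulDr : right_distributive mul add.
Hypothesis addz : forall a, add z a = a /\ add a z = a.
Hypothesis addN : forall a, add (neg a) a = z /\ add a (neg a) = z.

Lemma skew_ring_idem_zero r : add r r = r -> r = z.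
Proof.
move=> Hr.
by rewrite -(proj1 (addN r)) -{3}Hr addA (proj1 (addN r)) (proj1 (addz r)).
Qed.

Lemma skew_ring_mulr0 r : mul r z = z.
Proof. by apply: skew_ring_idem_zero; rewrite -mulDr (proj1 (addz z)). Qed.

End SkewRing.

Lemma rectangular_skew_ring_prod (B R : Type) (addB mulB : B -> B -> B)
    (addR mulR : R -> R -> R) :
  rectangular_band_semiring addB mulB -> skew_ring addR mulR ->
  rectangular_skew_ring (prod_op addB addR) (prod_op mulB mulR).
Proof.
move=> [HB [mulBB rect]] [HR [z [neg [addz addN]]]].
have [addBA _] := HB; have [addRA [_ [mulRDr _]]] := HR.
have addBB := rect_band_idem addBA rect.
have idem_zero := skew_ring_idem_zero addRA addz addN.
split; [split; [split=> [|[b r]] | move=> p q] | move=> [b r] [b' r']].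
- exact: prod_semiring.
- exists (b, neg r); rewrite /prod_op /= (proj2 (addN r)) (proj1 (addN r)).
  rewrite -rect (proj1 (addz r)) addBB mulBB.
  by rewrite (skew_ring_mulr0 addRA mulRDr addz addN).
- have ideal b1 r1 b2 r2 : in_ideal_plus (prod_op addB addR) (b1, r1) (b2, r2).
    exists (Some (b1, addR r1 (neg r2))), (Some (b1, z)); rewrite /prod_op /=.
    rewrite addBA -rect (proj2 (addz r2)) -addRA (proj1 (addN r2)).
    by rewrite (proj2 (addz r1)).
  by case: p q => [b1 r1] [b2 r2]; split; apply: ideal.
- rewrite /prod_op /= => -[_ /idem_zero ->] [_ /idem_zero ->].
  by rewrite addBB !(proj1 (addz _)).
Qed.

Lemma rectangular_skew_ring_iso (S T : Type) (addS mulS : S -> S -> S)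
    (addT mulT : T -> T -> T) (f : S -> T) :
  is_semiring addS mulS -> semiring_iso addS mulS addT mulT f ->
  rectangular_skew_ring addT mulT -> rectangular_skew_ring addS mulS.
Proof.
move=> HS [[g fK gK] [fadd fmul]] [[[_ HCR] HJ] HE].
have finj := can_inj fK.
split; [split; [split=> // a | move=> a b] | move=> e e' He He'].
- have [x [Ex [Cx Mx]]] := HCR (f a).
  by exists (g x); split; [|split]; apply: finj; rewrite ?fmul !fadd gK.
- have ideal a' b' : in_ideal_plus addS a' b'.
    have [[u [v Euv]] _] := HJ (f a') (f b').
    exists (omap g u), (omap g v); apply: finj; rewrite Euv.
    by case: u {Euv} => [u|]; case: v => [v|]; rewrite /= ?fadd ?gK.
  by split; apply: ideal.
- by apply: finj; rewrite !fadd; apply: HE; rewrite -fadd ?He ?He'.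
Qed.

Theorem theorem3p3 (S : Type) (add mul : S -> S -> S) :
  is_semiring add mul ->
  (rectangular_skew_ring add mul <->
   exists (B R : Type) (addB mulB : B -> B -> B) (addR mulR : R -> R -> R)
          (f : S -> B * R),
     rectangular_band_semiring addB mulB /\ skew_ring addR mulR /\
     semiring_iso add mul (prod_op addB addR) (prod_op mulB mulR) f).
Proof.
move=> HS; split; first exact: rectangular_skew_ring_decomposable.
move=> [B [R [addB [mulB [addR [mulR [f [HB [HR Hf]]]]]]]]].
exact: rectangular_skew_ring_iso HS Hf (rectangular_skew_ring_prod HB HR).
Qed.
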